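(* Let $G=(V,E)$ be a control flow graph, let $p$ be a predicate node with successors $s_1,s_2$ in $G$ and with at least two successors in $A_p$, and let $i\in\{1,2\}$. Let $a,b\in V_p\setminus\{p\}$ be two distinct nodes. Then every maximal path from $s_i$ in $G$ contains $a$ before any occurrence of $b$ if and only if there is an $s_i$-strip containing both $a$ and $b$ in which $a$ occurs before $b$.
   Context: A control flow graph (CFG) is a finite directed graph $G=(V,E)$ in which every node has at most two outgoing edges; nodes with exactly two outgoing edges are predicate nodes. A path from $n_1$ is a nonempty finite or infinite sequence of nodes with each adjacent pair an edge; it is maximal if it is infinite or its last node has no successor. $V_p$ is the set of nodes occurring on all maximal paths from $p$ in $G$. For $V'\subseteq V$, a $V'$-interval from $x$ to $y$ is a finite path $n_1\ldots n_k$ in $G$ with $k\ge 2$, $n_1=x\in V'$, $n_k=y\in V'$, and $n_i\notin V'$ for $1<i<k$. $A_p$ is the directed graph with node set $V_p$ and an edge $(x,y)$ iff there is a $V_p$-interval from $x$ to $y$ in $G$. For $i\in\{1,2\}$, $V_i$ is the set of nodes $n\in V_p$ such that there is a finite path in $G$ from $s_i$ to $n$ whose nodes other than the last one all lie outside $V_p$ (possibly $n=s_i$). An $s_i$-strip is a finite path $n\ldots m$ in $A_p$ whose first node lies in $V_i$ and all of whose other nodes lie in $V_p\setminus V_i$ (i.e., it belongs to $V_i.(V_p\setminus V_i)^*$), such that the successor of $m$ in $A_p$ is a node in $V_i$. *)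

From mathcomp Require Import all_boot.
Set Implicit Arguments. Unset Strict Implicit. Unset Printing Implicit Defensive.

Section CFG.
Variables (T : finType) (e : rel T).

Definition is_cfg : Prop := forall x : T, #|[set y | e x y]| <= 2.

Definition fin_maxpath (x : T) (r : seq T) : Prop :=
  path e x r /\ forall y, ~~ e (last x r) y.

(* infinite (hence maximal) path f 0, f 1, ... starting at x *)
Definition inf_maxpath (x : T) (f : nat -> T) : Prop :=
  f 0 = x /\ forall k, e (f k) (f k.+1).

Definition Vp (p n : T) : Prop :=
  (forall r, fin_maxpath p r -> n \in p :: r) /\
  (forall f, inf_maxpath p f -> exists k, f k = n).

(* V'-interval from x to y : path x :: m ++ [:: y] (length >= 2),
   endpoints in V', interior nodes m outside V' *)
Definition interval (V' : T -> Prop) (x y : T) : Prop :=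
  V' x /\ V' y /\
  exists m : seq T, path e x (rcons m y) /\ forall z, z \in m -> ~ V' z.

Definition Ap (p x y : T) : Prop := Vp p x /\ Vp p y /\ interval (Vp p) x y.

(* V_i for the successor s = s_i : nodes n of V_p reachable from s by a finite
   path whose nodes other than the last lie outside V_p (possibly n = s) *)
Definition Vi (p s n : T) : Prop :=
  Vp p n /\
  (n = s \/ exists m : seq T, path e s (rcons m n) /\
                             forall z, z \in s :: m -> ~ Vp p z).

Definition Ap_path (p x : T) (r : seq T) : Prop :=
  forall i, i < size r -> Ap p (nth x (x :: r) i) (nth x r i).

(* s-strip (s = s_i): a path n :: r in A_p with n in V_i, all other nodes in
   V_p \ V_i, and whose last node m has a (unique) successor in A_p, lying in V_i *)
Definition strip (p s : T) (q : seq T) : Prop :=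
  match q with
  | [::] => False
  | n :: r =>
      [/\ Ap_path p n r, Vi p s n,
          (forall z, z \in r -> Vp p z /\ ~ Vi p s z) &
          exists y, (forall z, Ap p (last n r) z <-> z = y) /\ Vi p s y]
  end.

End CFG.

Definition occurs_before (T : eqType) (a b : T) (q : seq T) : Prop :=
  exists i j, i < j < size q /\ nth a q i = a /\ nth a q j = b.

Definition fin_before (T : eqType) (a b : T) (q : seq T) : Prop :=
  exists k, k < size q /\ nth a q k = a /\ forall j, j <= k -> nth a q j <> b.

Definition inf_before (T : Type) (a b : T) (f : nat -> T) : Prop :=
  exists k, f k = a /\ forall j, j <= k -> f j <> b.

(* Write V for V_p \ {p}. Since p has two A_p-successors it lies on no cycle: on a
   simple cycle through p, every A_p-successor of p would be the first V_p-node of the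
   cycle. Every node of V then lies on all maximal paths from every node of V, so each
   x in V has exactly one A_p-successor [succ x], and [succ] maps V onto V, hence is a
   permutation of it. The V_p-nodes visited by a path from s_i are the [succ]-iterates of
   the first of them, a node of V_i. Hence a precedes b on every maximal path from s_i iff
   every [succ]-walk from V_i to b passes through a, and for a permutation this holds iff
   a and b occur in this order on a stretch of a [succ]-cycle that starts in V_i and stops
   just before the next node of V_i, i.e. on an s_i-strip. *)

From mathcomp Require Import all_boot zify boolp.

Set Implicit Arguments. Unset Strict Implicit. Unset Printing Implicit Defensive.

Section MaximalPaths.
Variables (T : finType) (e : rel T).
Implicit Types (x y z : T) (s : seq T) (A : pred T).

Definition maxpath_in x A : Prop :=
  (exists2 r, fin_maxpath e x r & all A (x :: r)) \/
  (exists2 f, inf_maxpath e x f & forall k, A (f k)).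

Lemma maxpath_in_sub x A B : {subset A <= B} -> maxpath_in x A -> maxpath_in x B.
Proof.
move=> AB [[r mr Ar]|[f mf Af]]; [left; exists r | right; exists f] => //.
  by apply/allP => z /(allP Ar) /AB.
by move=> k; apply: AB (Af k).
Qed.

Lemma inf_maxpath_prefix x f k : inf_maxpath e x f ->
  path e x (map f (iota 1 k)) /\ last x (map f (iota 1 k)) = f k.
Proof.
case=> f0 fS; rewrite -f0; elim: k => [|k [IHp IHl]] //.
by rewrite -[k.+1]addn1 iotaD map_cat cat_path last_cat IHp IHl /= add1n fS addn1.
Qed.

Lemma inf_maxpath_cat x s f : path e x s -> inf_maxpath e (last x s) f ->
  inf_maxpath e x (fun k => if k <= size s then nth x (x :: s) k else f (k - size s)).
Proof.
move=> ps [f0 fS]; split=> // k.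
case: (ltngtP k (size s)) => hk.
- by move/pathP: ps; apply.
- by rewrite subSn ?(ltnW hk) //; exact: fS.
- by rewrite hk subSnn; move: (nth_last x (x :: s)) => /= ->; rewrite -f0.
Qed.

Lemma maxpath_in_cat x s A : path e x s -> all A (x :: s) ->
  maxpath_in (last x s) A -> maxpath_in x A.
Proof.
move=> ps As [[r [pr sr] Ar]|[f mf Af]].
  left; exists (s ++ r); first by split; rewrite ?cat_path ?ps ?last_cat.
  by move: As Ar; rewrite -cat_cons all_cat => -> /andP[].
right; exists (fun k => if k <= size s then nth x (x :: s) k else f (k - size s)).
  exact: inf_maxpath_cat.
by move=> k; case: ifP => // ks; apply/(allP As)/mem_nth.
Qed.

Lemma maxpath_in_cycle x c : path e x (rcons c x) -> maxpath_in x (mem (x :: c)).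
Proof.
move=> pc; right; set n := size (x :: c).
exists (fun k => nth x (x :: c) (k %% n)); last by move=> k; apply: mem_nth; rewrite ltn_mod.
split=> [|k]; first by rewrite mod0n.
have kn : k %% n < n by rewrite ltn_mod.
have := pathP x pc (k %% n); rewrite size_rcons -rcons_cons nth_rcons kn => /(_ isT).
congr (e _ _); rewrite -addn1 -modnDml nth_rcons.
move: kn; rewrite /n /= ltnS leq_eqVlt => /orP[/eqP ->|kc].
  by rewrite ltnn eqxx addn1 modnn.
by rewrite kc addn1 (@modn_small (k %% _).+1).
Qed.

Lemma maxpath_in_hit x A y : maxpath_in x A ->
  maxpath_in x (predD1 A y) \/
  exists s, [/\ path e x s, last x s = y & maxpath_in y A].
Proof.
case=> [[r [pr sr] Ar]|[f mf Af]].
  have [yr|yr] := boolP (y \in x :: r); last first.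
    left; left; exists r => //; apply/allP => w wr /=; rewrite (allP Ar) // andbT.
    by apply: contraNneq yr => <-.
  case/splitPl: yr pr sr Ar => r1 r2 ly.
  rewrite cat_path last_cat ly -cat_cons all_cat => /andP[p1 p2] sr /andP[A1 A2].
  right; exists r1; split=> //; left; exists r2 => //=.
  by rewrite -ly (allP A1) ?mem_last.
have [[k fk]|nf] := pselect (exists k, f k = y).
  have [pk lk] := inf_maxpath_prefix k mf.
  right; exists (map f (iota 1 k)); split; rewrite ?lk //.
  right; exists (fun t => f (t + k)) => //; split=> [|t]; first by rewrite add0n.
  by rewrite addSn; apply: mf.2.
left; right; exists f => // k /=; rewrite Af andbT.
by apply/eqP => fk; apply: nf; exists k.
Qed.

Lemma maxpath_exists x : maxpath_in x predT.
Proof.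
pose next z := odflt z [pick w | e z w].
have e_next z : [exists w, e z w] -> e z (next z).
  by rewrite /next; case: pickP => [//|none /existsP[w]]; rewrite none.
pose sink k := ~~ [exists w, e (iter k next x) w].
have [[k0 sk0]|live] := pselect (exists k, sink k); last first.
  right; exists (fun k => iter k next x) => //; split=> // k; rewrite iterS.
  by apply/e_next/contraT => sk; case: live; exists k.
have [k /existsPn sk k_min] := ex_minnP (ex_intro sink k0 sk0).
left; exists (traject next (next x) k); last exact: all_predT.
split; last first.
  by move=> w; rewrite last_traject sk.
have {k_min} : forall t, t < k -> e (iter t next x) (iter t.+1 next x).
  move=> t tk; apply/e_next/contraT => st.
  by have := k_min t st; rewrite leqNgt tk.
elim: k {sk} => [//|k IH] ek.
rewrite trajectSr rcons_path last_traject -iterSr ek // andbT.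
by apply: IH => t tk; rewrite ek // ltnW.
Qed.

Lemma VpP x z : Vp e x z <-> ~ maxpath_in x (predC1 z).
Proof.
split=> [[Vfin Vinf] [[r mr Ar]|[f mf Af]]|Nz].
- by move: (allP Ar z (Vfin r mr)); rewrite /= eqxx.
- by have [k fk] := Vinf f mf; move: (Af k); rewrite /= fk eqxx.
split=> [r mr|f mf]; apply: contrapT => Nzr; apply: Nz.
  left; exists r => //; apply/allP => w wr /=.
  by apply/eqP => wz; apply: Nzr; rewrite -wz.
by right; exists f => // k /=; apply/eqP => fk; apply: Nzr; exists k.
Qed.

Lemma Vp_refl x : Vp e x x.
Proof. by split=> [r _|f [f0 _]]; [rewrite mem_head | exists 0]. Qed.

Lemma Vp_last x s z : path e x s -> z \notin x :: s -> Vp e x z -> Vp e (last x s) z.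
Proof.
move=> ps zs /VpP Nz; apply/VpP => Nl; apply: Nz; apply: maxpath_in_cat ps _ Nl.
by apply/allP => w ws /=; apply: contraNneq zs => <-.
Qed.

Lemma Vp_step x y z : e x y -> z <> x -> Vp e x z -> Vp e y z.
Proof.
move=> exy zx Vz; have [->|zy] := eqVneq z y; first exact: Vp_refl.
apply: (Vp_last (s := [:: y])) Vz; rewrite /= ?exy // !inE negb_or zy andbT.
exact/eqP.
Qed.

Lemma Vp_reach x z : Vp e x z -> exists2 s, path e x s & last x s = z.
Proof.
move=> /VpP Nz; have [avoid|[s [ps lz _]]] := maxpath_in_hit z (maxpath_exists x).
  by case: Nz; apply: maxpath_in_sub avoid => w /andP[].
by exists s.
Qed.

Lemma Vp_cycle x c z : path e x (rcons c x) -> Vp e x z -> z \in x :: c.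
Proof.
move=> pc /VpP Nz; apply: contraT => zc; case: Nz.
by apply: maxpath_in_sub (maxpath_in_cycle pc) => w wc /=; apply: contraNneq zc => <-.
Qed.

Lemma maxpath_in_avoid x y z A : Vp e y z -> {subset A <= predC1 z} ->
  maxpath_in x A -> maxpath_in x (predD1 A y).
Proof.
move=> /VpP Nz Az /(maxpath_in_hit y)[//|[s [_ _ avoid]]].
by case: Nz; apply: maxpath_in_sub avoid.
Qed.

Lemma path_last_visit A x s : path e x s -> A x ->
  exists u s', [/\ A u, path e u s', last u s' = last x s & ~~ has A s'].
Proof.
elim/last_ind: s => [|s z IH]; first by exists x, [::].
rewrite rcons_path last_rcons => /andP[ps ez] Ax.
have [Az|nAz] := boolP (A z); first by exists z, [::].
have [u [s' [Au ps' ls' ns']]] := IH ps Ax.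
exists u, (rcons s' z); split; rewrite ?last_rcons ?has_rcons ?negb_or ?nAz //.
by rewrite rcons_path ps' ls' ez.
Qed.

Definition dominates x a b : Prop :=
  forall s, path e x s -> last x s = b -> a \in x :: s.

Definition maxpaths_visit_before x a b : Prop :=
  (forall r, fin_maxpath e x r -> fin_before a b (x :: r)) /\
  (forall f, inf_maxpath e x f -> inf_before a b f).

Lemma maxpaths_visit_before_dominates x a b :
  maxpaths_visit_before x a b -> dominates x a b.
Proof.
move=> [finB infB] s ps lb; apply: contraT => a_notin.
have b_at : nth a (x :: s) (size s) = b by rewrite (set_nth_default x) // -last_nth.
case: (maxpath_exists b) => [[r [pr sr] _]|[f mf _]].
  have [|k [_ [ka kb]]] := finB (s ++ r).
    by split; rewrite ?cat_path ?last_cat lb ?ps.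
  rewrite -cat_cons nth_cat /= ltnS in ka.
  have [ks|sk] := leqP k (size s).
    by move: a_notin; rewrite -ka ks mem_nth.
  by case: (kb (size s) (ltnW sk)); rewrite -cat_cons nth_cat /= ltnSn.
rewrite -lb in mf; have [k [ka kb]] := infB _ (inf_maxpath_cat ps mf).
have [ks|sk] := leqP k (size s).
  by move: a_notin; rewrite -ka ks mem_nth.
by case: (kb (size s) (ltnW sk)); rewrite leqnn (set_nth_default a).
Qed.

Lemma dominates_maxpaths_visit_before x a b : Vp e x a -> a <> b ->
  dominates x a b -> maxpaths_visit_before x a b.
Proof.
move=> [Vfin Vinf] ab dom; split=> [r mr|f mf].
  have ar := Vfin r mr; exists (index a (x :: r)); rewrite index_mem nth_index //.
  do 2!split=> //; move=> j ja bj.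
  have {}ja : j < index a (x :: r).
    by rewrite ltn_neqAle ja andbT; apply/eqP => je; apply: ab; rewrite -bj je nth_index.
  have jr : j <= size r by rewrite -ltnS (leq_trans ja) ?index_size.
  have lj : last x (take j r) = b.
    rewrite (last_nth x) size_takel // -[x :: take j r]/(take j.+1 (x :: r)) nth_take //.
    by rewrite (set_nth_default a) ?ltnS.
  have := dom _ (take_path j mr.1) lj.
  by rewrite -[x :: take j r]/(take j.+1 (x :: r)) => /index_ltn; rewrite ltnS leqNgt ja.
have [k0 fk0] := Vinf f mf.
have [k /eqP fk k_min] := ex_minnP (ex_intro (fun k => f k == a) k0 (introT eqP fk0)).
exists k; split=> // j jk fj; have [pj lj] := inf_maxpath_prefix j mf.
have := dom _ pj; rewrite lj fj => /(_ erefl).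
rewrite -mf.1 -[_ :: _]/(map f (iota 0 j.+1)) => /mapP[t]; rewrite mem_iota add0n => tj ft.
have := k_min t; rewrite -ft eqxx => /(_ isT) kt.
by apply: ab; rewrite ft -fj (_ : t = j) //; lia.
Qed.

End MaximalPaths.

Section InjectiveWalks.
Variables (T : finType) (f : T -> T) (E : pred T).
Hypothesis f_inj : injective f.

Lemma iter_inj n : injective (iter n f).
Proof. by elim: n => // n IH x y /= /f_inj/IH. Qed.

Definition walk_dominates a b : Prop :=
  forall w K, w \in E -> iter K f w = b -> a \in traject f w K.+1.

Definition iter_strip n L : Prop :=
  [/\ n \in E, forall t, 0 < t <= L -> iter t f n \notin E & iter L.+1 f n \in E].

Lemma strip_walk_dominates n i j : n \in E ->
  (forall t, 0 < t <= j -> iter t f n \notin E) -> i < j ->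
  walk_dominates (iter i f n) (iter j f n).
Proof.
move=> En noE ij w K Ew wK; apply/trajectP.
have [jK|Kj] := leqP j K.
  exists (i + (K - j)); first by lia.
  have : iter j f (iter (K - j) f w) = iter j f n by rewrite -iterD subnKC.
  by move/iter_inj => wn; rewrite iterD wn.
have : iter K f w = iter K f (iter (j - K) f n) by rewrite -iterD subnKC // ltnW.
by move/iter_inj => wn; move: Ew; rewrite wn (negPf (noE _ _)) //; lia.
Qed.

Lemma walk_dominates_strip a b w K : walk_dominates a b -> a != b ->
  w \in E -> iter K f w = b ->
  exists n L, iter_strip n L /\
    exists i j, [/\ i < j <= L, iter i f n = a & iter j f n = b].
Proof.
move=> dom ab Ew wK.
(* The strip starts at the last entry n of the walk from w to b, and ends just before
   the first entry after n, which exists because [f] is periodic. *)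
pose hit t := (t <= K) && (iter t f w \in E).
have hit_le t : hit t -> t <= K by case/andP.
have [tn /andP[tnK Etn] tn_max] := ex_maxnP (ex_intro hit 0 Ew) hit_le.
set n := iter tn f w in Etn.
have nb : iter (K - tn) f n = b by rewrite /n -iterD subnK.
have noE t : 0 < t <= K - tn -> iter t f n \notin E.
  case/andP=> t0 tK; apply/negP => Et.
  have : hit (t + tn) by rewrite /hit iterD Et andbT; lia.
  by move/tn_max; lia.
have /trajectP[i iK an] := dom n (K - tn) Etn nb.
have back : exists t, (0 < t) && (iter t f n \in E).
  by exists (order f n); rewrite order_gt0 iter_order.
have [[//|L] /andP[_ EL] L_min] := ex_minnP back.
exists n, L; split.
  split=> // t /andP[t0 tL]; apply/negP => Et.
  by have := L_min t; rewrite t0 Et => /(_ isT); rewrite leqNgt ltnS tL.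
exists i, (K - tn); split=> //; apply/andP; split.
  by rewrite ltn_neqAle -ltnS iK andbT; apply: contraNneq ab => iKt; rewrite an -nb iKt.
by rewrite leqNgt; apply: contraTN EL => LK; rewrite noE.
Qed.

End InjectiveWalks.

Section RootSuccessors.
Variables (T : finType) (e : rel T) (p y1 y2 : T).
Hypothesis y1_neq_y2 : y1 <> y2.
Hypotheses (Ap_y1 : Ap e p p y1) (Ap_y2 : Ap e p p y2).

Local Notation inVp := (fun z => `[< Vp e p z >]).
Local Notation inner z := (Vp e p z /\ z <> p).

Lemma Ap_interval x y : Ap e p x y ->
  exists2 m, path e x (rcons m y) & {in m, forall z, ~ Vp e p z}.
Proof. by case=> _ [_ [_ [_ [m [pm Nm]]]]]; exists m. Qed.

Lemma first_Vp_Ap x m y : Vp e p x -> Vp e p y -> path e x (rcons m y) ->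
  ~~ has inVp m -> Ap e p x y.
Proof.
move=> Vx Vy pm /hasPn Nm; do 4!split=> //; exists m; split=> // z /Nm /negP Nz.
by move/asboolP.
Qed.

Lemma simple_cycle_Ap_root m c1 r y :
  path e p (rcons (rcons m c1 ++ r) p) -> uniq (p :: rcons m c1 ++ r) ->
  Vp e p c1 -> ~~ has inVp m -> Ap e p p y -> y = c1.
Proof.
(* Otherwise y comes after c1 on the cycle, and the cycle p -> y -> ... -> p through the
   interval of y would have to revisit c1. *)
move=> pc uc Vc1 /hasPn nVm Ay; apply: contrapT => yc1.
have [my pmy Nmy] := Ap_interval Ay.
have c1p : c1 != p by apply: contraTneq uc => ->; rewrite /= mem_cat mem_rcons mem_head.
have c1my : c1 \notin my by apply/negP => /Nmy.
have [yp|yp] := eqVneq y p.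
  move: pmy; rewrite yp => /Vp_cycle/(_ Vc1).
  by rewrite inE (negbTE c1p) (negbTE c1my).
have : y \in rcons m c1 ++ r by move: (Vp_cycle pc Ay.2.1); rewrite inE (negbTE yp).
rewrite mem_cat mem_rcons inE => /orP[/orP[/eqP //|ym]|yr].
  by have := nVm y ym; rewrite (asboolT Ay.2.1).
case/splitPr: yr pc uc => r1 r2 pc uc.
have c1r : c1 \notin r1 ++ y :: r2.
  move: uc; rewrite /= cat_uniq => /and4P[_ _ /hasPn c1r _].
  by apply/negP => /c1r; rewrite mem_rcons mem_head.
have : c1 \in p :: rcons my y ++ r2.
  apply: Vp_cycle Vc1; rewrite rcons_cat cat_path pmy last_rcons.
  by move: pc; rewrite !rcons_cat rcons_cons catA cat_path => /andP[_ /andP[]].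
rewrite -cat_cons mem_cat in_cons mem_rcons in_cons (negbTE c1p) (negbTE c1my) orbF /=.
by move=> h; move/negP: c1r; apply; rewrite mem_cat in_cons h orbT.
Qed.

Lemma root_acyclic s : path e p s -> p \notin s.
Proof.
apply: contraTN => /splitPr[s1 s2]; apply/negP; rewrite cat_path /= => /and3P[ps1 e1 _].
have [c pc uc] : exists2 c, path e p (rcons c p) & uniq (p :: c).
  by move: e1; case: (shortenP ps1) => c pc uc _ e1; exists c; rewrite // rcons_path pc.
have [hasV|/hasPn nV] := boolP (has inVp c).
  case/split_find: hasV pc uc => c1 m r /asboolP Vc1 nVm pc uc.
  have to_c1 := simple_cycle_Ap_root pc uc Vc1 nVm.
  by apply: y1_neq_y2; rewrite (to_c1 _ Ap_y1) (to_c1 _ Ap_y2).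
have only_p z : Vp e p z -> z = p.
  by move=> Vz; case/predU1P: (Vp_cycle pc Vz) => // /nV; rewrite asboolT.
by apply: y1_neq_y2; rewrite (only_p _ Ap_y1.2.1) (only_p _ Ap_y2.2.1).
Qed.

Lemma Ap_neq_root x y : Ap e p x y -> y <> p.
Proof.
move=> Ay yp; have [s ps lx] := Vp_reach Ay.1; have [m pm _] := Ap_interval Ay.
have := root_acyclic (s := s ++ rcons m y).
by rewrite cat_path ps lx pm mem_cat mem_rcons yp mem_head orbT => /(_ isT).
Qed.

Lemma Ap_inner x y : Ap e p x y -> inner y.
Proof. by move=> Ay; split; [exact: Ay.2.1 | exact: Ap_neq_root Ay]. Qed.

Lemma inner_other z : exists2 y, inner y & y <> z.
Proof.
have [<-|/eqP y1z] := eqVneq y1 z; last by exists y1; first exact: Ap_inner Ap_y1.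
by exists y2; [exact: Ap_inner Ap_y2 | exact: nesym].
Qed.

Lemma Ap_root_Vp y z : Ap e p p y -> inner z -> Vp e y z.
Proof.
move=> Ay [Vz zp]; have [->|zy] := eqVneq z y; first exact: Vp_refl.
have [m pm Nm] := Ap_interval Ay.
have := Vp_last pm _ Vz; rewrite last_rcons; apply.
rewrite in_cons mem_rcons in_cons (negbTE zy) negb_or; apply/andP; split; first exact/eqP.
by apply/negP => /Nm.
Qed.

Lemma inner_Vp x z : inner x -> inner z -> Vp e x z.
Proof.
(* A maximal path from x avoiding z also avoids y1 and y2. Prefixing it with the part
   after the last visit to {y1, y2} of a walk from y1 to x, and with the interval from p,
   yields a maximal path from p that avoids one of y1, y2. *)
move=> Ix Iz; apply/VpP => avoid_z.
have avoid y : Ap e p p y -> maxpath_in e x (predC1 y).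
  move=> Ay; have := maxpath_in_avoid (Ap_root_Vp Ay Iz) (fun w => id) avoid_z.
  by apply: maxpath_in_sub => w /andP[].
have [s ps ly] := Vp_reach (Ap_root_Vp Ap_y1 Ix).
have y1_in : pred2 y1 y2 y1 by rewrite /= eqxx.
have [u [s' [/pred2P u12 pu lu /hasPn ns']]] := path_last_visit ps y1_in.
have [y1s y2s] : y1 \notin s' /\ y2 \notin s'.
  by split; apply/negP => /ns'; rewrite /= eqxx ?orbT.
suff escape v : Ap e p p u -> Ap e p p v -> v <> u -> v \notin s' -> False.
  case: u12 => uy; subst u; [apply: (escape y2) | apply: (escape y1)] => //.
  exact: nesym.
move=> Au Av vu vs'; have [mu pmu Nmu] := Ap_interval Au.
have v_off : v \notin p :: rcons mu u ++ s'.
  rewrite in_cons mem_cat mem_rcons in_cons !negb_or vs' andbT.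
  apply/and3P; split; [exact/eqP/(Ap_neq_root Av) | exact/eqP |].
  by apply/negP => /Nmu; apply; exact: Av.2.1.
have /VpP := Av.2.1; apply; apply: (maxpath_in_cat (s := rcons mu u ++ s')).
- by rewrite cat_path pmu last_rcons.
- by apply/allP => w ws /=; apply: contraNneq v_off => <-.
- by rewrite last_cat last_rcons lu ly; exact: avoid.
Qed.

Lemma Ap_functional x u w : inner x -> Ap e p x u -> Ap e p x w -> u = w.
Proof.
(* After the last visit to {u, w} on a walk from u to x, the interval back from x closes
   a cycle that avoids the other one of u, w, against [inner_Vp]. *)
move=> Ix Au Aw; apply: contrapT => uw.
suff escape c d s : Ap e p x c -> Ap e p x d -> path e c s -> last c s = x ->
    d \notin c :: s -> False.
  have [s ps lx] := Vp_reach (inner_Vp (Ap_inner Au) Ix).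
  have u_in : pred2 u w u by rewrite /= eqxx.
  have [c [s' [/pred2P cuw pc lc /hasPn ns']]] := path_last_visit ps u_in.
  have [us' ws'] : u \notin s' /\ w \notin s'.
    by split; apply/negP => /ns'; rewrite /= eqxx ?orbT.
  rewrite lx in lc; case: cuw => cE; subst c.
    by apply: (escape u w s') => //; rewrite in_cons negb_or ws' andbT; apply/eqP/nesym.
  by apply: (escape w u s') => //; rewrite in_cons negb_or us' andbT; apply/eqP.
move=> Ac Ad pc lc dcs; have [mc pmc Nmc] := Ap_interval Ac.
have := Vp_cycle (c := s ++ mc) _ (inner_Vp (Ap_inner Ac) (Ap_inner Ad)).
rewrite rcons_cat cat_path pc lc pmc => /(_ isT).
by rewrite -cat_cons mem_cat (negbTE dcs) => /Nmc; apply; exact: Ad.2.1.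
Qed.

Lemma Ap_total x : inner x -> exists y, Ap e p x y.
Proof.
move=> Ix; have [z Iz zx] := inner_other x.
have [s ps lz] := Vp_reach (inner_Vp Ix Iz).
have hasV : has inVp s.
  case: s ps lz => [_ /= xz|w s _ lz]; first by case: zx.
  by apply/hasP; exists z; [rewrite -lz /= mem_last | exact/asboolP/Iz.1].
case/split_find: hasV ps => y m r /asboolP Vy nVm; rewrite cat_path => /andP[pm _].
by exists y; exact: first_Vp_Ap Ix.1 Vy pm nVm.
Qed.

(* The identity outside V_p \ {p}, so that [succ] is a permutation of the whole type. *)
Definition succ x := odflt x [pick y | `[< inner x /\ Ap e p x y >]].

Lemma succ_Ap x : inner x -> Ap e p x (succ x).
Proof.
move=> Ix; rewrite /succ; case: pickP => [y /asboolP[] //|none].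
by have [y Axy] := Ap_total Ix; have := none y; rewrite asboolT.
Qed.

Lemma succ_out x : ~ inner x -> succ x = x.
Proof. by move=> Nx; rewrite /succ; case: pickP => [y /asboolP[]|]. Qed.

Lemma Ap_succ x y : inner x -> Ap e p x y -> y = succ x.
Proof. by move=> Ix Axy; apply: Ap_functional Ix Axy (succ_Ap Ix). Qed.

Lemma succ_inner x : inner x -> inner (succ x).
Proof. by move/succ_Ap/Ap_inner. Qed.

Lemma iter_succ_inner k x : inner x -> inner (iter k succ x).
Proof. by move=> Ix; elim: k => //= k /succ_inner. Qed.

Lemma path_succ_iter x s : inner x -> path e x s -> Vp e p (last x s) ->
  exists K, iter K succ x = last x s /\ {subset traject succ x K.+1 <= x :: s}.
Proof.
elim: {s}_.+1 {-2}s (ltnSn (size s)) x => // n IH s sn x Ix ps Vl.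
case: s => [|w s] in sn ps Vl *; first by exists 0; split=> // z.
have hasV : has inVp (w :: s).
  by apply/hasP; exists (last w s); [exact: mem_last | exact/asboolP].
case/split_find: hasV sn ps Vl => y m r /asboolP Vy nVm.
rewrite size_cat size_rcons cat_path last_cat last_rcons => sn /andP[pm pr] Vl.
have yE := Ap_succ Ix (first_Vp_Ap Ix.1 Vy pm nVm).
have Iy : inner y by rewrite yE; exact: succ_inner.
have rn : size r < n by lia.
have [K [yK sub]] := IH r rn y Iy pr Vl.
exists K.+1; split; first by rewrite iterSr -yE.
move=> z; rewrite trajectS -yE in_cons => /predU1P[->|/sub]; first exact: mem_head.
by rewrite !in_cons mem_cat mem_rcons => /predU1P[->|->]; rewrite ?mem_head !orbT.
Qed.

Lemma succ_iter_path x K : inner x ->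
  exists s, [/\ path e x s, last x s = iter K succ x &
                {in x :: s, forall z, Vp e p z -> z \in traject succ x K.+1}].
Proof.
elim: K x => [|K IH] x Ix.
  by exists [::]; split=> // z; rewrite inE => /eqP -> _; rewrite mem_head.
have [m pm Nm] := Ap_interval (succ_Ap Ix).
have [s [ps ls sub]] := IH _ (succ_inner Ix).
exists (rcons m (succ x) ++ s); split.
- by rewrite cat_path pm last_rcons.
- by rewrite last_cat last_rcons ls iterSr.
move=> z; rewrite in_cons mem_cat mem_rcons in_cons -orbA => /or4P[/eqP->|/eqP->|/Nm//|zs] Vz.
- exact: mem_head.
- by rewrite !in_cons eqxx orbT.
- by rewrite in_cons sub ?orbT // in_cons zs orbT.
Qed.

Lemma succ_inj : injective succ.
Proof.
have onto z : exists x, succ x = z.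
  have [Iz|Nz] := pselect (inner z); last by exists z; rewrite succ_out.
  have [y Iy yz] := inner_other z.
  have [s ps lz] := Vp_reach (inner_Vp Iy Iz).
  have Vl : Vp e p (last y s) by rewrite lz; exact: Iz.1.
  have [[|K] [yK _]] := path_succ_iter Iy ps Vl.
    by case: yz; rewrite -lz -yK.
  by exists (iter K succ y); rewrite -iterS yK.
apply: in2T; apply/image_injP; rewrite eqn_leq leq_image_card /=.
apply/subset_leq_card/subsetP => z _; have [x <-] := onto z; exact: image_f.
Qed.

Lemma Ap_path_traject n r : inner n -> Ap_path e p n r ->
  n :: r = traject succ n (size r).+1.
Proof.
move=> In Ar; apply: (@eq_from_nth _ n); first by rewrite size_traject.
move=> i ir; rewrite nth_traject //; rewrite /= ltnS in ir.
elim: i ir => [//|i IH] ir /=.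
have := Ar i ir; rewrite IH; last exact: ltnW.
exact: Ap_succ (iter_succ_inner i In).
Qed.

Lemma traject_Ap_path n L : inner n -> Ap_path e p n (traject succ (succ n) L).
Proof.
move=> In i; rewrite size_traject => iL.
rewrite -[n :: _]/(traject succ n L.+1) nth_traject 1?ltnW //.
rewrite (set_nth_default (succ n) n) ?size_traject // nth_traject // -iterSr.
exact: succ_Ap (iter_succ_inner i In).
Qed.

Section Entries.
Variable si : T.
Hypothesis e_psi : e p si.

Local Notation entry := ((fun n => `[< Vi e p si n >]) : pred T).

Lemma Vi_inner n : Vi e p si n -> inner n.
Proof.
case=> Vn [nE|[m [pm _]]]; split=> // np.
  by have := root_acyclic (s := [:: si]); rewrite /= e_psi -nE np mem_head => /(_ isT).
have := root_acyclic (s := si :: rcons m n).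
by rewrite /= e_psi pm np in_cons mem_rcons mem_head orbT => /(_ isT).
Qed.

Lemma path_entry s : path e si s -> Vp e p (last si s) ->
  exists v K, [/\ v \in entry, iter K succ v = last si s &
                  {subset traject succ v K.+1 <= si :: s}].
Proof.
move=> ps Vl.
suff [v [r [Vv pr lr sub]]] : exists v r, [/\ Vi e p si v, path e v r,
    last v r = last si s & {subset v :: r <= si :: s}].
  have [|K [vK tsub]] := path_succ_iter (Vi_inner Vv) pr; first by rewrite lr.
  by exists v, K; split; [exact/asboolP | rewrite vK | move=> z /tsub/sub].
have hasV : has inVp (si :: s).
  by apply/hasP; exists (last si s); [exact: mem_last | exact/asboolP].
have [m [v [r [sE Vv nVm]]]] : exists m v r, [/\ si :: s = rcons m v ++ r,
    Vp e p v & ~~ has inVp m].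
  by case/split_find: hasV => v m r /asboolP Vv nVm; exists m, v, r.
case: m sE nVm => [|w m] [wE sE] nVm; subst s.
  by subst v; exists si, r; split=> //; split=> //; left.
subst w; move: ps; rewrite cat_path last_rcons => /andP[pm pr].
exists v, r; split=> //.
- split=> //; right; exists m; split=> // z zm Vz.
  by move/hasPn: nVm => /(_ z zm); rewrite (asboolT Vz).
- by rewrite last_cat last_rcons.
- by move=> z zr; rewrite cat_rcons -cat_cons mem_cat zr orbT.
Qed.

Lemma dominates_walk a b : Vp e p a -> Vp e p b ->
  dominates e si a b <-> walk_dominates succ entry a b.
Proof.
move=> Va Vb; split=> [dom w K /asboolP Vw wK|dom s ps lb].
  have [s [ps ls sub]] := succ_iter_path K (Vi_inner Vw).
  apply: sub (Va); case: Vw ps ls wK => _ [->|[m [pm Nm]]] ps ls wK.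
    by apply: dom; rewrite // ls.
  have := dom (rcons m w ++ s); rewrite cat_path pm last_cat last_rcons ps ls wK.
  move=> /(_ isT erefl); rewrite -cat_cons mem_cat -rcons_cons mem_rcons in_cons.
  case/orP=> [/predU1P[->|/Nm/(_ Va)//]|a_s]; first exact: mem_head.
  by rewrite in_cons a_s orbT.
have Vl : Vp e p (last si s) by rewrite lb.
have [v [K [Ev vK sub]]] := path_entry ps Vl.
by apply: sub; apply: dom; rewrite // vK.
Qed.

Lemma strip_traject q : strip e p si q ->
  exists n L, [/\ q = traject succ n L.+1, n \in entry &
                  forall t, 0 < t <= L -> iter t succ n \notin entry].
Proof.
case: q => [//|n r] [Ar Vn Nr _]; have In := Vi_inner Vn.
exists n, (size r); split; [exact: Ap_path_traject | exact/asboolP |].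
move=> t /andP[t0 tr]; have : iter t succ n \in r.
  have [rE] := Ap_path_traject In Ar; rewrite rE.
  by apply/trajectP; exists t.-1; [lia | rewrite -iterSr prednK].
by case/Nr=> _ NV; apply/negP => /asboolP.
Qed.

Lemma traject_strip n L : iter_strip succ entry n L ->
  strip e p si (traject succ n L.+1).
Proof.
case=> /asboolP Vn noE /asboolP VL; have In := Vi_inner Vn.
split=> //; first exact: traject_Ap_path.
  move=> z /trajectP[t tL ->]; rewrite -iterSr; split; first exact: (iter_succ_inner _ In).1.
  by move/asboolP; apply/negP/noE; rewrite ltnS.
exists (iter L.+1 succ n); split=> // z; rewrite last_traject iterS.
split=> [|->]; first exact: Ap_succ (iter_succ_inner L In).
exact: succ_Ap (iter_succ_inner L In).
Qed.

Lemma walk_dominates_iff_strip a b : inner b -> a <> b ->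
  walk_dominates succ entry a b <-> exists q, strip e p si q /\ occurs_before a b q.
Proof.
move=> Ib ab; split=> [dom|[q [sq [i [j [/andP[ij jq] [ai bj]]]]]]].
  have [s ps lb] := Vp_reach (Vp_step e_psi Ib.2 Ib.1).
  have Vl : Vp e p (last si s) by rewrite lb; exact: Ib.1.
  have [w [K [Ew wK _]]] := path_entry ps Vl; rewrite lb in wK.
  have [n [L [sn [i [j [/andP[ij jL] an bn]]]]]] :=
    walk_dominates_strip succ_inj dom (introN eqP ab) Ew wK.
  exists (traject succ n L.+1); split; first exact: traject_strip.
  exists i, j; rewrite size_traject ij ltnS jL.
  by rewrite !(set_nth_default n a) ?size_traject ?nth_traject //; lia.
have [n [L [qE En noE]]] := strip_traject sq; subst q.
rewrite size_traject in jq; have iL : i < L.+1 by lia.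
rewrite (set_nth_default n a) ?size_traject // nth_traject // in ai.
rewrite (set_nth_default n a) ?size_traject // nth_traject // in bj.
rewrite -ai -bj; apply: (strip_walk_dominates (@succ_inj) En) ij => t /andP[t0 tj].
by apply: noE; rewrite t0; lia.
Qed.

End Entries.

End RootSuccessors.

Theorem lemma4p12 (T : finType) (e : rel T) (p s1 s2 si a b : T) :
  is_cfg e ->
  s1 != s2 -> e p s1 -> e p s2 ->
  (exists y1 y2, y1 <> y2 /\ Ap e p p y1 /\ Ap e p p y2) ->
  (si = s1 \/ si = s2) ->
  Vp e p a -> Vp e p b -> a <> p -> b <> p -> a <> b ->
  ((forall r, fin_maxpath e si r -> fin_before a b (si :: r)) /\
   (forall f, inf_maxpath e si f -> inf_before a b f))
  <->
  (exists q, strip e p si q /\ occurs_before a b q).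
Proof.
move=> _ _ e_ps1 e_ps2 [y1 [y2 [y12 [Ap1 Ap2]]]] si12 Va Vb ap bp ab.
have e_psi : e p si by case: si12 => ->.
apply: (iff_trans _ (walk_dominates_iff_strip y12 Ap1 Ap2 e_psi (conj Vb bp) ab)).
apply: (iff_trans _ (dominates_walk y12 Ap1 Ap2 e_psi Va Vb)).
split; first exact: maxpaths_visit_before_dominates.
exact: dominates_maxpaths_visit_before (Vp_step e_psi ap Va) ab.
Qed.
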